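(* For each $r\in\{1,2,3\}$ there exist graphs $G_r$ and $H_r$ with $\omega^{(r)}(G_r)=\omega^{(r)}(H_r)$ but $\omega^{(r+1)}(G_r)\ne\omega^{(r+1)}(H_r)$. Hence $\omega^{(1)}$, $\omega^{(2)}$, $\omega^{(3)}$ are strictly weaker than $\omega^{(2)}$, $\omega^{(3)}$, $\omega^{(4)}$ respectively.
   Context: Graphs are finite, simple and undirected; an $N$-vertex graph has $V(G)=\{1,\dots,N\}$. Let $w_k(x,y)$ be the number of walks of length $k$ from $x$ to $y$, $w_*(x,y)=(w_0(x,y),\dots,w_{N-1}(x,y))$. Define $\omega_0(x)=w_*(x,x)$, $\omega_{r+1}(x)=\big(\omega_r(x),\{\!\{(w_*(x,y),\omega_r(y))\}\!\}_{y\in V(G)}\big)$, where $\{\!\{\cdot\}\!\}$ denotes a multiset, and $\omega^{(r)}(G)=\{\!\{\omega_r(x)\}\!\}_{x\in V(G)}$. *)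

From mathcomp Require Import all_boot.
Set Implicit Arguments. Unset Strict Implicit. Unset Printing Implicit Defensive.

(* A finite simple undirected graph on N vertices; vertex set 'I_N = {0..N-1}
   (a relabelling of {1..N}). *)
Record graph := Graph {
  gN : nat;
  gadj : rel 'I_gN;
  gadj_sym : symmetric gadj;
  gadj_irr : irreflexive gadj }.

Fixpoint walks {G : graph} (k : nat) (x y : 'I_(gN G)) : nat :=
  match k with
  | 0 => nat_of_bool (x == y)
  | k.+1 => \sum_(z : 'I_(gN G)) (nat_of_bool (gadj x z)) * walks k z y
  end.

Definition wstar (G : graph) (x y : 'I_(gN G)) : seq nat :=
  [seq walks k x y | k <- iota 0 (gN G)].

(* omega_eq r x y  <->  omega_r(x) (in G) = omega_r(y) (in H).
   Equality of multisets {{ (w_*(x,z), omega_r(z)) }}_z is expressed as the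
   existence of a bijection V(G) -> V(H) matching equal elements. *)
Fixpoint omega_eq {G H : graph} (r : nat) (x : 'I_(gN G)) (y : 'I_(gN H)) : Prop :=
  match r with
  | 0 => wstar x x = wstar y y
  | r.+1 => omega_eq r x y /\
      exists f : 'I_(gN G) -> 'I_(gN H), bijective f /\
        forall z, wstar x z = wstar y (f z) /\ omega_eq r z (f z)
  end.

Definition omega_multiset_eq (r : nat) (G H : graph) : Prop :=
  exists f : 'I_(gN G) -> 'I_(gN H), bijective f /\
    forall x, omega_eq r x (f x).

From mathcomp Require Import all_boot zify.
From Stdlib Require Import BinNat.
Set Implicit Arguments. Unset Strict Implicit. Unset Printing Implicit Defensive.

(* omega_{r+1}(x) contains omega_r(x) as a component, so equality of omega^(r+1)
   implies equality of omega^(r).  The separating pairs are incidence graphs of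
   2-(8,4,6) designs, and both multiset equalities are decided by computation:
   omega_r(x) = omega_r(y), for vertices of either graph, holds exactly when x and y
   get the same colour after r rounds of a colour refinement run on both graphs at
   once, which starts from (a code of) w_*(x,x) and refines the colour of x by the
   multiset of pairs (code of w_*(x,z), colour of z).  Then omega^(r)(G) = omega^(r)(H)
   says that the two colour lists are permutations of each other.  Walk counts are
   computed in binary, by iterated multiplication with the adjacency matrix. *)

Definition perfect_matching (n m : nat) (R : 'I_n -> 'I_m -> Prop) :=
  exists f : 'I_n -> 'I_m, bijective f /\ forall z, R z (f z).

Lemma perfect_matching_iff n m (R R' : 'I_n -> 'I_m -> Prop) :
  (forall z w, R z w <-> R' z w) -> perfect_matching R <-> perfect_matching R'.
Proof. by move=> RR'; split=> -[f [f_bij Rf]]; exists f; split=> // z; apply/RR'. Qed.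

Lemma perm_eq_matching (T : eqType) n m (F : 'I_n -> T) (F' : 'I_m -> T) :
  perfect_matching (fun z w => F z = F' w) ->
  perm_eq [seq F z | z <- enum 'I_n] [seq F' w | w <- enum 'I_m].
Proof.
move=> [f [[g fK gK] Ff]].
rewrite (eq_map Ff) map_comp; apply: perm_map; apply: uniq_perm.
- by rewrite map_inj_uniq ?enum_uniq //; exact: can_inj fK.
- exact: enum_uniq.
- by move=> w; rewrite mem_enum; apply/mapP; exists (g w); rewrite ?mem_enum ?gK.
Qed.

Lemma matching_perm_eq (T : eqType) n m (F : 'I_n -> T) (F' : 'I_m -> T) :
  perm_eq [seq F z | z <- enum 'I_n] [seq F' w | w <- enum 'I_m] ->
  perfect_matching (fun z w => F z = F' w).
Proof.
move=> FF'.
have nm : n = m by move/perm_size: FF'; rewrite !size_map -!enumT !size_enum_ord.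
subst m; case: n F F' FF' => [|n] F F' FF'; first by exists id; split; [exists id | case].
case/(perm_iotaP (F ord0)): FF' => Is; rewrite size_map size_enum_ord => Is_perm FE.
have Is_size : size Is = n.+1 by rewrite (perm_size Is_perm) size_iota.
have Is_bound (z : 'I_n.+1) : nth 0 Is z < n.+1.
  have : nth 0 Is z \in iota 0 n.+1 by rewrite -(perm_mem Is_perm) mem_nth ?Is_size.
  by rewrite mem_iota.
pose f z := Ordinal (Is_bound z).
have f_inj : injective f.
  move=> z1 z2 /(congr1 val) /eqP; rewrite /= nth_uniq ?Is_size //.
    by move/eqP/val_inj.
  by rewrite (perm_uniq Is_perm) iota_uniq.
exists f; split; first exact: injF_bij.
move=> z; have /(congr1 (nth (F ord0) ^~ z)) := FE.
rewrite (nth_map z) ?size_enum_ord // nth_ord_enum => ->.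
rewrite (nth_map 0) ?Is_size // (nth_map z) ?size_enum_ord //.
by congr F'; apply: val_inj; rewrite /= nth_enum_ord.
Qed.

Lemma matchingP (T : eqType) n m (F : 'I_n -> T) (F' : 'I_m -> T) :
  perfect_matching (fun z w => F z = F' w) <->
  perm_eq [seq F z | z <- enum 'I_n] [seq F' w | w <- enum 'I_m].
Proof. by split; [apply: perm_eq_matching | apply: matching_perm_eq]. Qed.

Lemma omega_multiset_eq_succ r G H :
  omega_multiset_eq r.+1 G H -> omega_multiset_eq r G H.
Proof. by move=> [f [f_bij omega_f]]; exists f; split=> // x; case: (omega_f x). Qed.

(* [enum 'I_n] does not reduce under [vm_compute]; [ord_seq n] does. *)
Definition insub_ord (n i : nat) : option 'I_n :=
  (if i < n as b return i < n = b -> option 'I_n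
   then fun lt_i_n => Some (Ordinal lt_i_n) else fun _ => None) erefl.

Definition ord_seq (n : nat) : seq 'I_n := pmap (insub_ord n) (iota 0 n).

Lemma insub_ordE n i : omap val (insub_ord n i) = if i < n then Some i else None.
Proof. by rewrite /insub_ord; move: (erefl (i < n)); case: {2 3}(i < n) => //= ->. Qed.

Lemma ord_seqE n : ord_seq n = enum 'I_n.
Proof.
apply: (inj_map val_inj); rewrite val_enum_ord /ord_seq.
have: all (fun i => i < n) (iota 0 n) by apply/allP=> i; rewrite mem_iota.
elim: (iota 0 n) => //= i s IHs /andP[lt_i_n s_lt_n].
by have := insub_ordE n i; rewrite lt_i_n; case: (insub_ord n i) => //= j [<-]; rewrite IHs.
Qed.

Lemma nth_map_ord_seq (T : Type) (x0 : T) n (f : 'I_n -> T) (i : 'I_n) :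
  nth x0 [seq f j | j <- ord_seq n] i = f i.
Proof. by rewrite ord_seqE (nth_map i) ?size_enum_ord // nth_ord_enum. Qed.

Lemma mem_ord_seq n (i : 'I_n) : i \in ord_seq n.
Proof. by rewrite ord_seqE mem_enum. Qed.

Lemma map_nth_enum_ord (T : Type) (x0 : T) n (s : seq T) :
  size s = n -> [seq nth x0 s i | i : 'I_n <- enum 'I_n] = s.
Proof.
by move=> <-; rewrite -[RHS](mkseq_nth x0) /mkseq -val_enum_ord -map_comp.
Qed.

Definition unit_mxN (n : nat) : seq (seq N) :=
  [seq [seq if x == z then 1%num else 0%num | z <- ord_seq n] | x <- ord_seq n].

Definition entryN (M : seq (seq N)) (x z : nat) : N := nth 0%num (nth [::] M x) z.

Fixpoint rowD (s t : seq N) : seq N :=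
  match s, t with
  | a :: s', b :: t' => (a + b)%num :: rowD s' t'
  | [::], _ => t
  | _, [::] => s
  end.

Definition adj_mul (G : graph) (M : seq (seq N)) : seq (seq N) :=
  [seq foldr (fun u acc => if gadj x u then rowD (nth [::] M u) acc else acc) [::]
      (ord_seq (gN G)) | x <- ord_seq (gN G)].

Definition walk_mxs (G : graph) : seq (seq (seq N)) :=
  traject (adj_mul G) (unit_mxN (gN G)) (gN G).

Definition walk_vec (ms : seq (seq (seq N))) (x z : nat) : seq N :=
  [seq entryN M x z | M <- ms].

Lemma nat_of_binD (a b : N) : (a + b)%num = a + b :> nat.
Proof. by case: a => [|p]; case: b => [|q] //=; rewrite ?addn0 ?nat_of_add_pos. Qed.

Lemma nth_rowD s t i : nth 0%num (rowD s t) i = (nth 0%num s i + nth 0%num t i)%num.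
Proof. by elim: s t i => [|a s IHs] [|b t] [|i] //=; rewrite ?N.add_0_r. Qed.

Lemma entryN_adj_mul G M (x z : 'I_(gN G)) :
  entryN (adj_mul G M) x z = \sum_(u : 'I_(gN G)) gadj x u * entryN M u z :> nat.
Proof.
rewrite /entryN /adj_mul nth_map_ord_seq -big_enum -ord_seqE.
elim: (ord_seq (gN G)) => [|u s IHs]; first by rewrite big_nil /= nth_nil.
rewrite big_cons /=; case: (gadj x u) => /=; last by rewrite IHs.
by rewrite nth_rowD nat_of_binD IHs mul1n.
Qed.

Lemma entryN_walks G k (x z : 'I_(gN G)) :
  entryN (iter k (adj_mul G) (unit_mxN (gN G))) x z = walks k x z :> nat.
Proof.
elim: k x z => [|k IHk] x z /=.
  by rewrite /entryN /unit_mxN !nth_map_ord_seq; case: (x == z).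
by rewrite entryN_adj_mul; apply: eq_bigr => u _; rewrite IHk.
Qed.

Lemma traject_iota (T : Type) (f : T -> T) x n :
  traject f x n = [seq iter i f x | i <- iota 0 n].
Proof. by elim: n => // n IHn; rewrite trajectSr IHn -addn1 iotaD map_cat cats1. Qed.

Lemma walk_vec_wstar G (x z : 'I_(gN G)) :
  map nat_of_bin (walk_vec (walk_mxs G) x z) = wstar x z.
Proof.
rewrite /walk_vec /walk_mxs traject_iota /wstar -!map_comp.
by apply: eq_map => k; exact: entryN_walks.
Qed.

Lemma walk_vec_eq G H (x z : 'I_(gN G)) (y w : 'I_(gN H)) :
  walk_vec (walk_mxs G) x z = walk_vec (walk_mxs H) y w <-> wstar x z = wstar y w.
Proof.
rewrite -!walk_vec_wstar; split=> [-> // | ].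
exact/inj_map/(can_inj nat_of_binK).
Qed.

Definition lexle (p q : nat * nat) := (p.1 < q.1) || (p.1 == q.1) && (p.2 <= q.2).

Lemma lexle_total : total lexle. Proof. by move=> [a b] [c d]; rewrite /lexle /=; lia. Qed.

Lemma lexle_trans : transitive lexle.
Proof. by move=> [a b] [c d] [e f]; rewrite /lexle /=; lia. Qed.

Lemma lexle_anti : antisymmetric lexle.
Proof.
move=> [a b] [c d]; rewrite /lexle /= => le_ab_cd.
by have [-> ->] : a = c /\ b = d by lia.
Qed.

Lemma index_eqE (T : eqType) (s : seq T) a b :
  a \in s -> b \in s -> index a s = index b s <-> a = b.
Proof. by move=> a_s b_s; split=> [/index_inj | -> //]; apply. Qed.

Lemma pair_sort_lexle_eq (a b : nat) (s t : seq (nat * nat)) :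
  (a, sort lexle s) = (b, sort lexle t) <-> a = b /\ perm_eq s t.
Proof.
have sortP := perm_sortP lexle_total lexle_trans lexle_anti.
by split=> [[-> /sortP] | [-> /sortP ->]].
Qed.

(* Sorting makes the multiset of pairs a canonical value. *)
Definition colour_key k (w : 'I_k -> 'I_k -> nat) (c : seq nat) (x : 'I_k) :=
  (nth 0 c x, sort lexle [seq (w x z, nth 0 c z) | z <- ord_seq k]).

Section ColourRefinement.

Variables (G H : graph).
Variables (wG : 'I_(gN G) -> 'I_(gN G) -> nat) (wH : 'I_(gN H) -> 'I_(gN H) -> nat).

(* Both graphs are coloured with a common palette: a key is renamed to its first
   position in the joint list of keys. *)
Fixpoint colours (r : nat) : seq nat * seq nat :=
  if r is r'.+1 then
    let c := colours r' in
    let keysG := [seq colour_key wG c.1 x | x <- ord_seq (gN G)] in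
    let keysH := [seq colour_key wH c.2 y | y <- ord_seq (gN H)] in
    ([seq index k (keysG ++ keysH) | k <- keysG], [seq index k (keysG ++ keysH) | k <- keysH])
  else ([seq wG x x | x <- ord_seq (gN G)], [seq wH y y | y <- ord_seq (gN H)]).

Lemma size_colours r : size (colours r).1 = gN G /\ size (colours r).2 = gN H.
Proof. by case: r => [|r]; split; rewrite /= !size_map ord_seqE size_enum_ord. Qed.

Hypothesis wstar_code : forall x z y w, wG x z = wH y w <-> wstar x z = wstar y w.

Lemma colours_omega_eq r (x : 'I_(gN G)) (y : 'I_(gN H)) :
  omega_eq r x y <-> nth 0 (colours r).1 x = nth 0 (colours r).2 y.
Proof.
elim: r x y => [|r IHr] x y; first by rewrite /= !nth_map_ord_seq wstar_code.
rewrite /= -!map_comp !nth_map_ord_seq /=.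
rewrite index_eqE ?mem_cat ?map_f ?mem_ord_seq ?orbT //.
rewrite pair_sort_lexle_eq !ord_seqE -matchingP -IHr.
apply: and_iff_compat_l.
apply: (perfect_matching_iff (R := fun z w => wstar x z = wstar y w /\ omega_eq r z w)) => z w.
by rewrite pair_equal_spec wstar_code IHr.
Qed.

Lemma omega_multiset_eq_colours r :
  omega_multiset_eq r G H <-> perm_eq (colours r).1 (colours r).2.
Proof.
have [sizeG sizeH] := size_colours r.
rewrite -(map_nth_enum_ord 0 sizeG) -(map_nth_enum_ord 0 sizeH) -matchingP.
exact: perfect_matching_iff (colours_omega_eq r).
Qed.

End ColourRefinement.

(* The vectors w_*(x, z) of both graphs are replaced by their positions in a common
   table, so that colour refinement only compares small numbers. *)
Definition walk_table (G H : graph) (msG msH : seq (seq (seq N))) : seq (seq N) :=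
  [seq walk_vec msG x z | x : 'I_(gN G) <- ord_seq (gN G), z : 'I_(gN G) <- ord_seq (gN G)] ++
  [seq walk_vec msH y w | y : 'I_(gN H) <- ord_seq (gN H), w : 'I_(gN H) <- ord_seq (gN H)].

Definition walk_codes (G : graph) (ms : seq (seq (seq N))) (T : seq (seq N)) :=
  [seq [seq index (walk_vec ms x z) T | z : 'I_(gN G) <- ord_seq (gN G)]
     | x : 'I_(gN G) <- ord_seq (gN G)].

Definition walk_code_tables (G H : graph) : seq (seq nat) * seq (seq nat) :=
  let msG := walk_mxs G in let msH := walk_mxs H in
  let T := walk_table G H msG msH in
  (walk_codes G msG T, walk_codes H msH T).

Definition code_of k (t : seq (seq nat)) (x z : 'I_k) : nat := nth 0 (nth [::] t x) z.

Lemma walk_codesP G H (x z : 'I_(gN G)) (y w : 'I_(gN H)) :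
  code_of (walk_code_tables G H).1 x z = code_of (walk_code_tables G H).2 y w <->
  wstar x z = wstar y w.
Proof.
rewrite /code_of /walk_codes /= !nth_map_ord_seq -walk_vec_eq.
by rewrite index_eqE // mem_cat (allpairs_f (fun x z : 'I__ => walk_vec _ x z))
  ?(allpairs_f (fun y w : 'I__ => walk_vec _ y w)) ?mem_ord_seq ?orbT.
Qed.

Definition omega_separates (r : nat) (G H : graph) : bool :=
  let t := walk_code_tables G H in
  let c := @colours G H (code_of t.1) (code_of t.2) in
  perm_eq (c r).1 (c r).2 && ~~ perm_eq (c r.+1).1 (c r.+1).2.

Lemma omega_separatesP r G H :
  omega_separates r G H -> omega_multiset_eq r G H /\ ~ omega_multiset_eq r.+1 G H.
Proof.
move=> /andP[eq_r neq_r1].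
have codeP := @walk_codesP G H.
split; first exact/(omega_multiset_eq_colours codeP).
by move/(omega_multiset_eq_colours codeP); apply/negP.
Qed.

(* Points are 0..7; block i of B is vertex 8 + i. *)
Definition incident (B : seq (seq nat)) (x y : nat) :=
  (x < 8) && (8 <= y) && (x \in nth [::] B (y - 8)).

Definition design_adj (B : seq (seq nat)) (x y : 'I_36) := incident B x y || incident B y x.

Lemma design_adj_sym B : symmetric (design_adj B).
Proof. by move=> x y; rewrite /design_adj orbC. Qed.

Lemma design_adj_irr B : irreflexive (design_adj B).
Proof. by move=> x; rewrite /design_adj orbb /incident; case: ltnP => //= /leq_gtF ->. Qed.

Definition incidence_graph B := Graph (design_adj_sym B) (design_adj_irr B).

Definition blocks1a : seq (seq nat) :=
  [:: [:: 0; 1; 2; 4]; [:: 0; 1; 2; 6]; [:: 0; 1; 3; 4]; [:: 0; 1; 3; 5]; [:: 0; 1; 4; 6]; [:: 0; 1; 6; 7]; [:: 0; 2; 3; 5]; [:: 0; 2; 3; 6]; [:: 0; 2; 3; 7]; [:: 0; 2; 4; 7]; [:: 0; 3; 5; 7]; [:: 0; 4; 5; 6]; [:: 0; 4; 5; 7]; [:: 0; 5; 6; 7]; [:: 1; 2; 3; 7]; [:: 1; 2; 4; 5]; [:: 1; 2; 5; 6]; [:: 1; 2; 5; 7]; [:: 1; 3; 4; 7]; [:: 1; 3; 5; 6]; [:: 1; 3; 6; 7]; [:: 1; 4; 5; 7]; [:: 2; 3; 4; 5]; [:: 2; 3; 4; 6]; [:: 2; 4; 6; 7]; [:: 2; 5;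 6; 7]; [:: 3; 4; 5; 6]; [:: 3; 4; 6; 7]].
Definition blocks1b : seq (seq nat) :=
  [:: [:: 0; 1; 2; 6]; [:: 0; 1; 2; 7]; [:: 0; 1; 3; 5]; [:: 0; 1; 4; 6]; [:: 0; 1; 4; 7]; [:: 0; 1; 5; 6]; [:: 0; 2; 3; 4]; [:: 0; 2; 3; 7]; [:: 0; 2; 4; 5]; [:: 0; 2; 5; 6]; [:: 0; 3; 4; 6]; [:: 0; 3; 5; 7]; [:: 0; 3; 6; 7]; [:: 0; 4; 5; 7]; [:: 1; 2; 3; 4]; [:: 1; 2; 3; 5]; [:: 1; 2; 4; 6]; [:: 1; 2; 5; 7]; [:: 1; 3; 4; 7]; [:: 1; 3; 5; 6]; [:: 1; 3; 6; 7]; [:: 1; 4; 5; 7]; [:: 2; 3; 4; 5]; [:: 2; 3; 6; 7]; [:: 2; 4; 6; 7]; [:: 2; 5; 6; 7]; [:: 3; 4; 5; 6]; [:: 4; 5; 6; 7]].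
Definition blocks2a : seq (seq nat) :=
  [:: [:: 0; 1; 2; 4]; [:: 0; 1; 2; 5]; [:: 0; 1; 2; 6]; [:: 0; 1; 3; 4]; [:: 0; 1; 3; 5]; [:: 0; 1; 3; 7]; [:: 0; 2; 3; 7]; [:: 0; 2; 4; 7]; [:: 0; 2; 5; 6]; [:: 0; 3; 4; 6]; [:: 0; 3; 5; 6]; [:: 0; 4; 5; 7]; [:: 0; 4; 6; 7]; [:: 0; 5; 6; 7]; [:: 1; 2; 3; 6]; [:: 1; 2; 4; 6]; [:: 1; 2; 5; 7]; [:: 1; 3; 4; 5]; [:: 1; 3; 6; 7]; [:: 1; 4; 5; 7]; [:: 1; 4; 6; 7]; [:: 1; 5; 6; 7]; [:: 2; 3; 4; 5]; [:: 2; 3; 4; 7]; [:: 2; 3; 5; 7]; [:: 2; 3; 6; 7]; [:: 2; 4; 5; 6]; [:: 3; 4; 5; 6]].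
Definition blocks2b : seq (seq nat) :=
  [:: [:: 0; 1; 2; 5]; [:: 0; 1; 3; 5]; [:: 0; 1; 3; 6]; [:: 0; 1; 4; 6]; [:: 0; 1; 4; 7]; [:: 0; 1; 5; 7]; [:: 0; 2; 3; 4]; [:: 0; 2; 3; 7]; [:: 0; 2; 4; 5]; [:: 0; 2; 5; 6]; [:: 0; 2; 6; 7]; [:: 0; 3; 4; 5]; [:: 0; 3; 6; 7]; [:: 0; 4; 6; 7]; [:: 1; 2; 3; 4]; [:: 1; 2; 3; 6]; [:: 1; 2; 4; 6]; [:: 1; 2; 4; 7]; [:: 1; 2; 5; 7]; [:: 1; 3; 5; 7]; [:: 1; 3; 6; 7]; [:: 1; 4; 5; 6]; [:: 2; 3; 4; 7]; [:: 2; 3; 5; 6]; [:: 2; 5; 6; 7]; [:: 3; 4; 5; 6]; [:: 3; 4; 5; 7]; [:: 4; 5; 6; 7]].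
Definition blocks3a : seq (seq nat) :=
  [:: [:: 0; 1; 2; 3]; [:: 0; 1; 2; 7]; [:: 0; 1; 3; 6]; [:: 0; 1; 4; 5]; [:: 0; 1; 4; 7]; [:: 0; 1; 6; 7]; [:: 0; 2; 3; 5]; [:: 0; 2; 4; 5]; [:: 0; 2; 4; 6]; [:: 0; 2; 6; 7]; [:: 0; 3; 4; 5]; [:: 0; 3; 4; 6]; [:: 0; 3; 5; 7]; [:: 0; 5; 6; 7]; [:: 1; 2; 3; 6]; [:: 1; 2; 4; 5]; [:: 1; 2; 4; 7]; [:: 1; 2; 5; 6]; [:: 1; 3; 4; 7]; [:: 1; 3; 5; 6]; [:: 1; 3; 5; 7]; [:: 1; 4; 5; 6]; [:: 2; 3; 4; 6]; [:: 2; 3; 4; 7]; [:: 2; 3; 5; 7]; [:: 2; 5; 6; 7]; [:: 3; 4; 6; 7]; [:: 4; 5; 6; 7]].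
Definition blocks3b : seq (seq nat) :=
  [:: [:: 0; 1; 2; 4]; [:: 0; 1; 2; 6]; [:: 0; 1; 3; 4]; [:: 0; 1; 3; 5]; [:: 0; 1; 4; 6]; [:: 0; 1; 5; 7]; [:: 0; 2; 3; 4]; [:: 0; 2; 3; 7]; [:: 0; 2; 5; 6]; [:: 0; 2; 5; 7]; [:: 0; 3; 5; 6]; [:: 0; 3; 6; 7]; [:: 0; 4; 5; 7]; [:: 0; 4; 6; 7]; [:: 1; 2; 3; 6]; [:: 1; 2; 4; 7]; [:: 1; 2; 5; 6]; [:: 1; 2; 5; 7]; [:: 1; 3; 4; 5]; [:: 1; 3; 5; 7]; [:: 1; 3; 6; 7]; [:: 1; 4; 6; 7]; [:: 2; 3; 4; 5]; [:: 2; 3; 4; 7]; [:: 2; 3; 6; 7]; [:: 2; 4; 5; 6]; [:: 3; 4; 5; 6]; [:: 4; 5; 6; 7]].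

Lemma separates1 : omega_separates 1 (incidence_graph blocks1a) (incidence_graph blocks1b).
Proof. by vm_compute. Qed.

Lemma separates2 : omega_separates 2 (incidence_graph blocks2a) (incidence_graph blocks2b).
Proof. by vm_compute. Qed.

Lemma separates3 : omega_separates 3 (incidence_graph blocks3a) (incidence_graph blocks3b).
Proof. by vm_compute. Qed.

Theorem theorem6p6 :
  forall r : nat, 1 <= r <= 3 ->
    (exists G H : graph,
        omega_multiset_eq r G H /\ ~ omega_multiset_eq r.+1 G H) /\
    (forall G H : graph, omega_multiset_eq r.+1 G H -> omega_multiset_eq r G H).
Proof.
move=> r /andP[r_ge1 r_le3]; split; last exact: omega_multiset_eq_succ.
have [->|[->|->]] : r = 1 \/ r = 2 \/ r = 3 by lia.
- by exists (incidence_graph blocks1a), (incidence_graph blocks1b); exact: omega_separatesP separates1.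
- by exists (incidence_graph blocks2a), (incidence_graph blocks2b); exact: omega_separatesP separates2.
- by exists (incidence_graph blocks3a), (incidence_graph blocks3b); exact: omega_separatesP separates3.
Qed.
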